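(* Let $G$ be a finite group, $p$ a prime, $P$ a Sylow $p$-subgroup of $G$, $I$ the kernel of the restriction map $R(G)\to R(P)$, and $h$ the number of conjugacy classes of elements of $G$ whose order is a power of $p$. Then $R(G)/I\cong\mathbb Z^h$ as Abelian groups.
   Context: $R(G)$ denotes the ring of virtual complex representations of $G$. *)

From mathcomp Require Import all_boot all_order all_algebra all_fingroup all_solvable all_field all_character vcharacter.
Set Implicit Arguments. Unset Strict Implicit. Unset Printing Implicit Defensive.
Import GRing.Theory Num.Theory.
Local Open Scope ring_scope.

(* R(G), the ring of virtual characters, is 'Z[irr G] (as a subset of 'CF(G)). *)
Definition virtual_chars (gT : finGroupType) (G : {group gT}) : pred 'CF(G) :=
  [pred phi | phi \in 'Z[irr G]%g].

Definition res_kernel (gT : finGroupType) (G P : {group gT}) : pred 'CF(G) :=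
  [pred phi | (phi \in 'Z[irr G]%g) && ('Res[P] phi == 0)].

Definition num_p_classes (p : nat) (gT : finGroupType) (G : {group gT}) : nat :=
  #|[set xG in classes G | p.-elt (repr xG)]%g|%N.

(* A / B ≅ Z^h as abelian groups (B ⊆ A subgroups of the Z-module V), expressed
   via the first isomorphism theorem: there is a group homomorphism A -> Z^h
   that is surjective with kernel exactly B. *)
Definition quotient_iso_Zpow (V : zmodType) (A B : pred V) (h : nat) : Prop :=
  exists f : V -> 'rV[int]_h,
    [/\ {in A &, forall a b, f (a - b) = f a - f b},
        forall z : 'rV[int]_h, exists2 a, a \in A & f a = z
      & {in A, forall a, (f a == 0) = (a \in B)}].

Arguments virtual_chars {gT} G.
Arguments res_kernel {gT} G P.
Arguments num_p_classes p {gT} G.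

From mathcomp Require Import all_boot all_order all_algebra all_fingroup all_solvable all_field all_character vcharacter.
Set Implicit Arguments. Unset Strict Implicit. Unset Printing Implicit Defensive.
Import GRing.Theory Num.Theory.
Local Open Scope group_scope.
Local Open Scope ring_scope.

(* Coordinates on irr G identify R(G) with Z^(Nirr G), and restriction to P
   becomes the integer matrix of the inner products '[Res chi_i, chi_j].  By
   the Smith normal form, the quotient of Z^n by the kernel of an integer
   matrix is free of rank equal to its rank over C.  That rank is the number of
   p-classes: a class function restricts to 0 on P iff it vanishes on every
   p-element of G (each one is conjugate into P), so, the character table being
   invertible, the kernel of the restriction matrix is that of the character
   table with the columns of the non-p-classes deleted. *)

Lemma map_mx_intr_inj (F : numDomainType) m n :
  injective (map_mx (intr : int -> F) : 'M_(m, n) -> 'M_(m, n)).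
Proof.
move=> A B /matrixP eqAB; apply/matrixP => i j.
by have := eqAB i j; rewrite !mxE => /intr_inj.
Qed.

Lemma unitmx_map_intr (R : comUnitRingType) n (L : 'M[int]_n) :
  L \in unitmx -> map_mx (intr : int -> R) L \in unitmx.
Proof.
move=> uL; have LV1 : map_mx intr L *m map_mx intr (invmx L) = 1%:M :> 'M[R]_n.
  by rewrite -map_mxM mulmxV // map_mx1.
by case: (mulmx1_unit LV1).
Qed.

Lemma mxrank_eq_ker (F : fieldType) n m1 m2 (A : 'M[F]_(n, m1)) (B : 'M[F]_(n, m2)) :
  (forall x : 'rV_n, (x *m A == 0) = (x *m B == 0)) -> \rank A = \rank B.
Proof.
move=> eq_ker.
have sub_ker m3 m4 (C : 'M[F]_(n, m3)) (D : 'M[F]_(n, m4)) :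
    (forall x : 'rV_n, (x *m C == 0) = (x *m D == 0)) -> (kermx C <= kermx D)%MS.
  move=> eqCD; apply/sub_kermxP/row_matrixP => i; rewrite row_mul row0.
  by apply/eqP; rewrite -eqCD -row_mul (sub_kermxP (submx_refl _)) row0.
have : \rank (kermx A) = \rank (kermx B).
  by apply/eqP; rewrite eqn_leq !mxrankS // sub_ker // => x; rewrite eq_ker.
rewrite !mxrank_ker => eq_corank.
by rewrite -(subKn (rank_leq_row A)) -(subKn (rank_leq_row B)) eq_corank.
Qed.

Lemma mxrank_colsub1 (F : fieldType) n k (g : 'I_k -> 'I_n) :
  injective g -> \rank (colsub g (1%:M : 'M[F]_n)) = k.
Proof.
move=> g_inj; set E := colsub g _.
have EtE : E^T *m E = 1%:M.
  apply/matrixP => l l'; rewrite !mxE (bigD1 (g l)) //= big1 => [|i ne_il].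
    by rewrite !mxE eqxx mul1r addr0 (inj_eq g_inj) eq_sym.
  by rewrite !mxE (negPf ne_il) mul0r.
apply/eqP; rewrite eqn_leq rank_leq_col -{1}(mxrank1 F k) -EtE.
exact: mxrankM_maxr.
Qed.

Lemma mul_rV_rdiag_eq0 (R : pzRingType) n m (c : nat -> R) (x : 'rV[R]_n) :
  (x *m \matrix_(i < n, j < m) (c i *+ (i == j :> nat)) == 0)
    = [forall i : 'I_n, (i < m)%N ==> (x 0 i * c i == 0)].
Proof.
apply/eqP/forallP => [xD0 i | xc0].
  apply/implyP => lt_im; have := congr1 (fun y : 'rV_m => y 0 (Ordinal lt_im)) xD0.
  rewrite !mxE (bigD1 i) //= big1 ?addr0 => [|k ne_ki]; last first.
    by rewrite mxE /= (val_eqE k i) (negPf ne_ki) mulr0n mulr0.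
  by rewrite mxE eqxx mulr1n => ->.
apply/rowP => j; rewrite !mxE big1 // => i _; rewrite mxE.
have [eq_ij | _] := eqVneq (i : nat) j; last by rewrite mulr0n mulr0.
by have /implyP/(_ _)/eqP := xc0 i; rewrite eq_ij ltn_ord mulr1n => ->.
Qed.

Lemma sorted_dvdz_nth_eq0 (d : seq int) i :
  sorted dvdz d -> (find (pred1 (0 : int)) d <= i)%N -> d`_i = 0.
Proof.
move=> sorted_d le_zi.
have [lt_zs | le_sz] := ltnP (find (pred1 (0 : int)) d) (size d); last first.
  by rewrite nth_default // (leq_trans le_sz).
have [lt_is | le_si] := ltnP i (size d); last by rewrite nth_default.
have has0 : has (pred1 (0 : int)) d by rewrite has_find.
have dz0 : d`_(find (pred1 (0 : int)) d) = 0 by apply/eqP; exact: (nth_find 0 has0).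
have := sorted_leq_nth dvdz_trans dvdzz 0 sorted_d _ _ lt_zs lt_is le_zi.
by rewrite dz0 dvd0z => /eqP.
Qed.

Lemma Smith_diag_ker (F : numDomainType) n m (d : seq int) : sorted dvdz d ->
  exists2 r, (r <= minn n m)%N &
    forall x : 'rV[F]_n,
      (x *m map_mx intr (\matrix_(i < n, j < m) (d`_i *+ (i == j :> nat))) == 0)
        = (x *m (pid_mx r : 'M_(n, r)) == 0).
Proof.
move=> sorted_d; exists (minn (find (pred1 (0 : int)) d) (minn n m)); first exact: geq_minr.
move=> x; set r := minn _ _.
have -> : map_mx intr (\matrix_(i < n, j < m) (d`_i *+ (i == j :> nat)))
    = \matrix_(i, j) ((d`_i)%:~R *+ (i == j :> nat)) :> 'M[F]_(n, m).
  by apply/matrixP => i j; rewrite !mxE rmorphMn.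
have -> : pid_mx r = \matrix_(i < n, j < r) ((i < r)%:R *+ (i == j :> nat)) :> 'M[F]_(n, r).
  by apply/matrixP => i j; rewrite !mxE; case: (i == j :> nat); rewrite ?mulr1n ?mulr0n.
rewrite (mul_rV_rdiag_eq0 _ (fun i => (d`_i)%:~R)) (mul_rV_rdiag_eq0 _ (fun i => (i < r)%:R)).
apply: eq_forallb => i /=.
have [lt_iz | le_zi] := ltnP i (find (pred1 (0 : int)) d); last first.
  have -> : (i < r)%N = false by apply/negbTE; rewrite -leqNgt geq_min le_zi.
  by rewrite sorted_dvdz_nth_eq0 // mulr0 eqxx implybT.
have dz : d`_i != 0 by rewrite -[_ == _]/(pred1 0 _) (before_find 0 lt_iz).
rewrite /r !ltn_min lt_iz ltn_ord /=.
by case: ltnP; rewrite ?mulr1 // mulf_eq0 intr_eq0 (negPf dz) orbF.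
Qed.

Lemma int_mx_ker_quotient_iso_Zpow (F : numFieldType) n m (M : 'M[int]_(n, m)) :
  quotient_iso_Zpow predT [pred a : 'rV_n | a *m M == 0] (\rank (map_mx (intr : int -> F) M)).
Proof.
have [L uL [R uR [d sorted_d ->]]] := int_Smith_normal_form M.
set D := \matrix_(i, j) _.
have [r le_r_nm Dker] := Smith_diag_ker F n m sorted_d.
have le_rn : (r <= n)%N := leq_trans le_r_nm (geq_minl n m).
have Mker (x : 'rV[F]_n) :
    (x *m map_mx intr (L *m D *m R) == 0) = (x *m (map_mx intr L *m (pid_mx r : 'M_(n, r))) == 0).
  rewrite !map_mxM !mulmxA mulmx_free_eq0; first exact: Dker.
  by rewrite row_free_unit unitmx_map_intr.
have -> : \rank (map_mx (intr : int -> F) (L *m D *m R)) = r.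
  rewrite (mxrank_eq_ker Mker) eqmxMfull ?row_full_unit ?unitmx_map_intr //.
  exact: rank_pid_mx.
exists (fun a => a *m L *m pid_mx r); split=> [a b _ _ | z | a _].
- by rewrite !mulmxBl.
- exists (z *m pid_mx r *m invmx L) => //.
  by rewrite mulmxKV // -mulmxA pid_mx_id // pid_mx_1 mulmx1.
- rewrite inE -!(inj_eq (@map_mx_intr_inj F _ _)) !raddf0 -mulmxA.
  by rewrite (map_mxM _ a) (map_mxM _ a) map_mxM map_pid_mx Mker.
Qed.

Lemma quotient_iso_Zpow_transfer (V W : zmodType) (A B : pred V) (A' B' : pred W)
    (g : V -> W) h :
  {in A &, {morph g : a b / a - b}} -> {in A, forall a, g a \in A'} ->
  (forall w, w \in A' -> exists2 a, a \in A & g a = w) ->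
  {in A, forall a, (g a \in B') = (a \in B)} ->
  quotient_iso_Zpow A' B' h -> quotient_iso_Zpow A B h.
Proof.
move=> gB gA gA_onto gB' [f [fB f_onto f_ker]].
exists (f \o g); split=> [a b Aa Ab | z | a Aa] /=.
- by rewrite gB // fB ?gA.
- by have [w /gA_onto[a Aa <-] <-] := f_onto z; exists a.
- by rewrite f_ker ?gA // gB'.
Qed.

Section IrrCoordinates.

Variables (gT : finGroupType) (G : {group gT}).

Definition irr_coords (phi : 'CF(G)) : 'rV[int]_(Nirr G) :=
  \row_i Num.floor '[phi, 'chi_i].

Lemma map_irr_coords phi :
  phi \in 'Z[irr G] -> map_mx intr (irr_coords phi) = \row_i '[phi, 'chi_i].
Proof.
by move=> Zphi; apply/rowP => i; rewrite !mxE floorK // Cint_cfdot_vchar_irr.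
Qed.

Lemma irr_coordsB : {in 'Z[irr G] &, {morph irr_coords : phi psi / phi - psi}}.
Proof.
move=> phi psi Zphi Zpsi; apply: (@map_mx_intr_inj algC).
rewrite raddfB /= !map_irr_coords ?rpredB //.
by apply/rowP => i; rewrite !mxE cfdotBl.
Qed.

Lemma irr_coords_onto z : exists2 phi, phi \in 'Z[irr G] & irr_coords phi = z.
Proof.
exists (\sum_i (z 0 i)%:~R *: 'chi_i).
  by apply: rpred_sum => i _; rewrite scaler_int rpredMz ?irr_vchar.
apply/rowP => i; rewrite mxE cfdot_suml (bigD1 i) //= big1 => [|j ne_ji].
  by rewrite cfdotZl cfnorm_irr mulr1 addr0 intrKfloor.
by rewrite cfdotZl cfdot_irr (negPf ne_ji) mulr0.
Qed.

Variable P : {group gT}.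

Definition cfRes_mx : 'M[algC]_(Nirr G, Nirr P) :=
  \matrix_(i, j) '['Res[P] 'chi[G]_i, 'chi[P]_j].

Definition cfRes_intmx : 'M[int]_(Nirr G, Nirr P) :=
  \matrix_(i, j) Num.floor (cfRes_mx i j).

Lemma map_cfRes_intmx : map_mx intr cfRes_intmx = cfRes_mx.
Proof.
apply/matrixP => i j; rewrite !mxE floorK //.
exact: Cint_cfdot_vchar_irr (cfRes_vchar _ (irr_vchar _)).
Qed.

Lemma mul_cfRes_mx_eq0 (a : 'rV[algC]_(Nirr G)) :
  (a *m cfRes_mx == 0) = ('Res[P] (\sum_i a 0 i *: 'chi_i) == 0).
Proof.
set psi := \sum_i _.
have aRes j : (a *m cfRes_mx) 0 j = '['Res[P] psi, 'chi_j].
  rewrite mxE linear_sum cfdot_suml; apply: eq_bigr => i _.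
  by rewrite linearZ cfdotZl mxE.
apply/eqP/eqP => [aR0 | Rpsi0].
  by rewrite [LHS]cfun_sum_cfdot big1 // => j _; rewrite -aRes aR0 mxE scale0r.
by apply/rowP => j; rewrite aRes Rpsi0 cfdot0l mxE.
Qed.

Lemma irr_coords_cfRes_eq0 phi : phi \in 'Z[irr G] ->
  (irr_coords phi *m cfRes_intmx == 0) = ('Res[P] phi == 0).
Proof.
move=> Zphi; rewrite -(inj_eq (@map_mx_intr_inj algC _ _)) raddf0 map_mxM.
rewrite map_irr_coords // map_cfRes_intmx mul_cfRes_mx_eq0 {2}[phi]cfun_sum_cfdot.
by congr ('Res _ == 0); apply: eq_bigr => i _; rewrite mxE.
Qed.

End IrrCoordinates.

Section SylowRestriction.

Variables (gT : finGroupType) (G P : {group gT}) (p : nat).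
Hypothesis sylP : p.-Sylow(G) P.

Definition p_elt_class_Iirr : {set Iirr G} := [set k | p.-elt (repr (irr_class k))].

Lemma num_p_classesE : num_p_classes p G = #|p_elt_class_Iirr|.
Proof.
rewrite /num_p_classes -(card_imset _ (can_inj (@irr_classK _ G))).
apply: eq_card => xG; rewrite !inE.
apply/andP/imsetP => [[Gx p_x] | [k p_k ->]].
  by exists (class_Iirr G xG); rewrite ?inE class_IirrK.
by rewrite irr_classP; rewrite inE in p_k.
Qed.

Lemma cfRes_Sylow_eq0 (psi : 'CF(G)) :
  ('Res[P] psi == 0) = [forall k in p_elt_class_Iirr, psi (repr (irr_class k)) == 0].
Proof.
have sPG := pHall_sub sylP; have pP := pHall_pgroup sylP.
apply/eqP/forall_inP => [Res0 k | psi0].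
  rewrite inE => p_x; set x := repr (irr_class k).
  have [Gx _] := repr_classesP (irr_classP k).
  have sxG : <[x]> \subset G by rewrite cycle_subG.
  have [y Gy sxP] := Sylow_Jsub sylP sxG p_x.
  have Pxy : (x ^ y)%g \in P by apply: (subsetP sxP); rewrite memJ_conjg cycle_id.
  by rewrite -(cfunJ _ _ Gy) -(cfResE _ sPG Pxy) Res0 cfunE.
apply/cfunP => x; rewrite cfunE.
have [Px | /cfun0->//] := boolP (x \in P).
have Gx : x \in G := subsetP sPG x Px.
have := psi0 (class_Iirr G (x ^: G)).
rewrite inE !class_IirrK ?mem_classes // cfun_repr cfResE // => /(_ _)/eqP -> //.
by have [z Gz ->] := repr_class G x; rewrite p_eltJ (mem_p_elt pP Px).
Qed.

Lemma mxrank_cfRes_Sylow : \rank (cfRes_mx G P) = num_p_classes p G.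
Proof.
rewrite num_p_classesE; set S := p_elt_class_Iirr.
pose E := colsub (@enum_val _ (mem S)) (1%:M : 'M[algC]_(Nirr G)).
rewrite -(mxrank_colsub1 algC (@enum_val_inj _ (mem S))) -/E.
have X_full : row_full (character_table G) by rewrite row_full_unit character_table_unit.
rewrite -(eqmxMfull E X_full).
apply: mxrank_eq_ker => a; rewrite mul_cfRes_mx_eq0 cfRes_Sylow_eq0.
set psi := \sum_i _.
have aXE l : (a *m (character_table G *m E)) 0 l = psi (repr (irr_class (enum_val l))).
  rewrite mulmxA mulmx_colsub mulmx1 !mxE sum_cfunE; apply: eq_bigr => i _.
  by rewrite cfunE mxE.
apply/forall_inP/eqP => [psi0 | aXE0 k Sk].
  by apply/rowP => l; rewrite aXE mxE; apply/eqP/psi0/enum_valP.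
by move/rowP/(_ (enum_rank_in Sk k)): aXE0; rewrite aXE enum_rankK_in // mxE => ->.
Qed.

End SylowRestriction.

Theorem proposition9p5 (gT : finGroupType) (G P : {group gT}) (p : nat) :
  prime p -> (P \in 'Syl_p(G))%g ->
  quotient_iso_Zpow (virtual_chars G) (res_kernel G P) (num_p_classes p G).
Proof.
move=> _; rewrite inE => sylP.
apply: (@quotient_iso_Zpow_transfer _ _ _ _ predT [pred a | a *m cfRes_intmx G P == 0]
          (@irr_coords _ G)).
- exact: irr_coordsB.
- by [].
- by move=> z _; apply: irr_coords_onto.
- by move=> phi Zphi; rewrite inE irr_coords_cfRes_eq0 // inE Zphi.
rewrite -(mxrank_cfRes_Sylow sylP) -map_cfRes_intmx.
exact: int_mx_ker_quotient_iso_Zpow.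
Qed.
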